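(* Let $V$ be a finite-dimensional vector space over a field of characteristic zero, and let $A^{a_1\dots a_p}$ and $B_{a_1\dots a_p}$ be $p$-forms (totally antisymmetric tensors, $A$ contravariant and $B$ covariant), with $A$ simple. Let $P^a{}_b=A^{ac_2\dots c_p}B_{bc_2\dots c_p}$. Then $$P\Bigl(P-\frac{1}{p}[P]\Bigr)=0.$$
   Context: Index-free notation for $(1,1)$-tensors: $P$ denotes $P^a{}_b$, products denote composition (e.g. $P^2=P^a{}_cP^c{}_b$), $[P]=P^c{}_c$ is the trace, and a scalar term in a tensor equation is understood as multiplied by the identity $\delta^a_b$. A $p$-form $A$ is simple if $A^{a_1\dots a_p}=u^{[a_1}\cdots w^{a_p]}$ for some vectors $u,\dots,w$, where square brackets denote antisymmetrisation. No metric is assumed. *)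

From HB Require Import structures.
From mathcomp Require Import all_boot all_order all_fingroup all_algebra.
Set Implicit Arguments. Unset Strict Implicit. Unset Printing Implicit Defensive.
Import GRing.Theory.
Local Open Scope ring_scope.

(* V = K^n with its standard basis; a rank-p tensor (contravariant or
   covariant) is given by its components, indexed by p-tuples of indices
   in 'I_n. *)
Definition tensor (K : fieldType) (n p : nat) := {ffun {ffun 'I_p -> 'I_n} -> K}.

Definition antisym (K : fieldType) (n p : nat) (T : tensor K n p) : Prop :=
  forall (s : 'S_p) (f : {ffun 'I_p -> 'I_n}),
    T [ffun i => f (s i)] = (-1) ^+ s * T f.

Definition wedge (K : fieldType) (n p : nat) (u : 'I_p -> 'I_n -> K) : tensor K n p :=
  [ffun f : {ffun 'I_p -> 'I_n} => (p`!)%:R^-1 *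
     \sum_(s : 'S_p) (-1) ^+ s * \prod_(i < p) u i (f (s i))].

Definition simple_form (K : fieldType) (n p : nat) (A : tensor K n p) : Prop :=
  exists u : 'I_p -> 'I_n -> K, A = wedge u.

Definition icons (n p : nat) (a : 'I_n) (c : {ffun 'I_p -> 'I_n}) : {ffun 'I_p.+1 -> 'I_n} :=
  [ffun i => if unlift ord0 i is Some j then c j else a].

Definition contrP (K : fieldType) (n p : nat) (A B : tensor K n p.+1) : 'M[K]_n :=
  \matrix_(a, b) \sum_(c : {ffun 'I_p -> 'I_n}) A (icons a c) * B (icons b c).

From HB Require Import structures.
From mathcomp Require Import all_boot all_order all_fingroup all_algebra.
Import GRing.Theory.
Local Open Scope ring_scope.

(* Write A = u_0 ^ ... ^ u_p.  Expanding the wedge along its first index gives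
   P = sum_k u_k (x) w_k, i.e. P = X Y where the columns of X are the u_k.  By
   antisymmetry of B, w_k(u_j) vanishes for j <> k and does not depend on k
   for j = k, so Y X = lambda I.  Hence P^2 = lambda P, and
   [P] = tr (Y X) = (p+1) lambda, so lambda never has to be computed. *)

Lemma mulmx_factor_sub_trace (K : fieldType) m n (X : 'M[K]_(n, m)) (Y : 'M_(m, n)) c :
  m%:R != 0 :> K -> Y *m X = c%:M ->
  X *m Y *m (X *m Y - (m%:R^-1 * \tr (X *m Y))%:M) = 0.
Proof.
move=> m_neq0 YX; rewrite mxtrace_mulC YX mxtrace_scalar -[c *+ m]mulr_natr mulrCA mulVf // mulr1.
by rewrite mulmxBr -mulmxA [Y *m _]mulmxA YX mul_mx_scalar mul_scalar_mx scalemxAr subrr.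
Qed.

Section Icons.
Context {n p : nat}.

Lemma icons0 (a : 'I_n) (c : {ffun 'I_p -> 'I_n}) : icons a c ord0 = a.
Proof. by rewrite ffunE unlift_none. Qed.

Lemma icons_neq0 (a b : 'I_n) (c : {ffun 'I_p -> 'I_n}) i :
  i != ord0 -> icons a c i = icons b c i.
Proof. by rewrite !ffunE; case: unliftP => [j _|->] //; rewrite eqxx. Qed.

Lemma sum_icons (V : nmodType) (F : {ffun 'I_p.+1 -> 'I_n} -> V) :
  \sum_a \sum_(c : {ffun 'I_p -> 'I_n}) F (icons a c) = \sum_f F f.
Proof.
rewrite pair_big (reindex (fun ac => icons ac.1 ac.2)) //=.
exists (fun f => (f ord0, [ffun j => f (lift ord0 j)])) => [[a c] _ | f _].
  by rewrite icons0; congr (_, _); apply/ffunP => j; rewrite !ffunE liftK.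
by apply/ffunP => i; rewrite !ffunE; case: unliftP => [j ->|->]; rewrite ?ffunE.
Qed.

End Icons.

Lemma card_perm_stab m (i k k' : 'I_m) :
  #|[pred s : 'S_m | s k == i]| = #|[pred s : 'S_m | s k' == i]|.
Proof.
rewrite -!sum1_card (reindex_inj (mulgI (tperm k' k))) /=.
by apply: eq_bigl => s; rewrite !inE permM tpermR.
Qed.

Section Contraction.
Context {K : fieldType} {n p : nat}.
Variable B : tensor K n p.

Definition contract (u : 'I_p -> 'I_n -> K) : K :=
  \sum_(f : {ffun 'I_p -> 'I_n}) (\prod_i u i (f i)) * B f.

Hypothesis B_antisym : antisym B.

Lemma contract_perm u (s : 'S_p) :
  \sum_(f : {ffun 'I_p -> 'I_n}) (\prod_i u i (f (s i))) * B f = (-1) ^+ s * contract u.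
Proof.
have perm_ffun_inj : injective (fun f : {ffun 'I_p -> 'I_n} => [ffun i => f ((s^-1)%g i)]).
  by move=> f g /ffunP fg; apply/ffunP => i; have := fg (s i); rewrite !ffunE permK.
rewrite (reindex_inj perm_ffun_inj) mulr_sumr; apply: eq_bigr => f _ /=.
rewrite B_antisym odd_permV mulrCA; congr (_ * (_ * _)).
by apply: eq_bigr => i _; rewrite ffunE permK.
Qed.

Lemma contract_alt u j k :
  2%:R != 0 :> K -> j != k -> u j =1 u k -> contract u = 0.
Proof.
move=> two_neq0 jk ujk; set t := tperm j k.
have u_t i : u (t i) =1 u i by case: tpermP => // -> x; rewrite ujk.
have : contract u = - contract u.
  have sign_t : (-1) ^+ t = -1 :> K by rewrite odd_tperm jk expr1.
  rewrite -mulN1r -sign_t -contract_perm.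
  apply: eq_bigr => f _; congr (_ * _).
  rewrite (reindex_inj (@perm_inj _ t)); apply: eq_bigr => i _.
  by rewrite u_t.
move/eqP; rewrite -subr_eq0 opprK -mulr2n -mulr_natr mulf_eq0 (negbTE two_neq0) orbF.
by move/eqP.
Qed.

Lemma eq_contract u v : u =2 v -> contract u = contract v.
Proof.
by move=> uv; apply: eq_bigr => f _; congr (_ * _); apply: eq_bigr => i _; rewrite uv.
Qed.

End Contraction.

Section Wedge.
Context {K : fieldType} {n p : nat}.
Variable u : 'I_p.+1 -> 'I_n -> K.

Definition wedge_minor (k : 'I_p.+1) (f : {ffun 'I_p.+1 -> 'I_n}) : K :=
  (p.+1)`!%:R^-1 *
    \sum_(s : 'S_p.+1 | s k == ord0) (-1) ^+ s * \prod_(i | i != k) u i (f (s i)).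

Lemma wedge_expand f : wedge u f = \sum_k u k (f ord0) * wedge_minor k f.
Proof.
rewrite ffunE (partition_big (fun s : 'S_p.+1 => (s^-1)%g ord0) predT) //= mulr_sumr.
apply: eq_bigr => k _; rewrite [RHS]mulrCA [in RHS]mulr_sumr; congr (_ * _).
apply: eq_big => [s | s /eqP <-]; first by rewrite -(inj_eq (@perm_inj _ s)) permKV eq_sym.
by rewrite (bigD1 ((s^-1)%g ord0)) //= permKV mulrCA.
Qed.

Lemma wedge_minor_icons k (a b : 'I_n) (c : {ffun 'I_p -> 'I_n}) :
  wedge_minor k (icons a c) = wedge_minor k (icons b c).
Proof.
rewrite /wedge_minor; congr (_ * _); apply: eq_bigr => s sk; congr (_ * _).
apply: eq_bigr => i ik.
by rewrite (icons_neq0 _ b) // -(eqP sk) (inj_eq perm_inj).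
Qed.

Variable B : tensor K n p.+1.

Definition contr_minor k (b : 'I_n) : K :=
  \sum_(c : {ffun 'I_p -> 'I_n}) wedge_minor k (icons b c) * B (icons b c).

Lemma contrP_wedge :
  contrP (wedge u) B = \matrix_(a, k) u k a *m \matrix_(k, b) contr_minor k b.
Proof.
apply/matrixP => a b; rewrite !mxE.
under eq_bigr do rewrite wedge_expand icons0 mulr_suml.
rewrite exchange_big; apply: eq_bigr => k _; rewrite !mxE mulr_sumr.
by apply: eq_bigr => c _; rewrite (wedge_minor_icons _ _ b) mulrA.
Qed.

Hypothesis B_antisym : antisym B.

Lemma contr_minor_dot k j :
  \sum_b contr_minor k b * u j b =
  (p.+1)`!%:R^-1 * #|[pred s : 'S_p.+1 | s k == ord0]|%:R *
    contract B [eta u with k |-> u j].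
Proof.
set v := [eta u with k |-> u j].
have v_split (s : 'S_p.+1) f : s k == ord0 ->
    \prod_i v i (f (s i)) = u j (f ord0) * \prod_(i | i != k) u i (f (s i)).
  move=> /eqP sk; rewrite (bigD1 k) //= eqxx sk; congr (_ * _).
  by apply: eq_bigr => i /negbTE ik; rewrite ik.
transitivity (\sum_(f : {ffun 'I_p.+1 -> 'I_n}) wedge_minor k f * B f * u j (f ord0)).
  rewrite -sum_icons; apply: eq_bigr => b _; rewrite mulr_suml.
  by apply: eq_bigr => c _; rewrite icons0.
transitivity ((p.+1)`!%:R^-1 * \sum_(s : 'S_p.+1 | s k == ord0)
    (-1) ^+ s * \sum_(f : {ffun 'I_p.+1 -> 'I_n}) (\prod_i v i (f (s i))) * B f).
  under [in RHS]eq_bigr do rewrite mulr_sumr.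
  rewrite exchange_big mulr_sumr.
  apply: eq_bigr => f _; rewrite -!mulrA !mulr_suml; congr (_ * _).
  apply: eq_bigr => s sk; rewrite v_split // -!mulrA; congr (_ * _).
  by rewrite [RHS]mulrC -mulrA.
rewrite -mulrA; congr (_ * _).
under eq_bigr do rewrite contract_perm // mulrA -signr_addb addbb mul1r.
by rewrite sumr_const mulr_natl.
Qed.

Lemma contr_minor_mulmx_scalar : 2%:R != 0 :> K ->
  \matrix_(k, b) contr_minor k b *m \matrix_(a, k) u k a =
  ((p.+1)`!%:R^-1 * #|[pred s : 'S_p.+1 | s ord0 == ord0]|%:R * contract B u)%:M.
Proof.
move=> two_neq0; apply/matrixP => k j; rewrite !mxE.
under eq_bigr do rewrite !mxE.
rewrite contr_minor_dot (card_perm_stab _ _ k ord0); case: eqVneq => [<- | kj].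
  by rewrite mulr1n; congr (_ * _); apply: eq_contract => i x /=; case: eqP => [->|].
have jk : j != k by rewrite eq_sym.
rewrite mulr0n (contract_alt B B_antisym _ j k two_neq0 jk) ?mulr0 // => x /=.
by rewrite eqxx (negbTE jk).
Qed.

End Wedge.

Theorem lemma1 (K : fieldType) (hK : [pchar K] =i pred0) (n p : nat)
  (A B : tensor K n p.+1) (hA : antisym A) (hB : antisym B) (hAs : simple_form A) :
  let P := contrP A B in
  P *m (P - ((p.+1)%:R^-1 * \tr P)%:M) = 0.
Proof.
have natr_neq0 m : m.+1%:R != 0 :> K by rewrite (pcharf0P K).1.
move=> P; case: hAs => u A_wedge; rewrite /P A_wedge contrP_wedge.
apply: mulmx_factor_sub_trace; first exact: natr_neq0.
exact: contr_minor_mulmx_scalar hB (natr_neq0 1%N).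
Qed.
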